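(* Let $\mathbb{H}^n$ be $\mathbb{R}^n$ or $\mathbb{C}^n$, and let $m\ge \frac{n(n+1)}{2}$ in the real case and $m\ge n^2$ in the complex case. The set of all $m$-element Parseval frames for $\mathbb{H}^n$ which are injective is dense, with respect to the distance $d$, in the set of all $m$-element Parseval frames for $\mathbb{H}^n$.
   Context: A frame $\{x_k\}_{k=1}^m$ for $\mathbb{H}^n$ is Parseval if $\sum_{k=1}^m|\langle x,x_k\rangle|^2=\|x\|^2$ for all $x$. A family $\{x_k\}$ is called injective if whenever a self-adjoint operator $T$ satisfies $\langle Tx_k,x_k\rangle=0$ for all $k$, then $T=0$. For $m$-element frames, $d(\{x_k\},\{y_k\})^2=\sum_{k=1}^m\|x_k-y_k\|^2$. *)

From HB Require Import structures.
From mathcomp Require Import all_boot all_order all_algebra.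
From mathcomp Require Import reals.
From mathcomp Require Export complex.
Set Implicit Arguments. Unset Strict Implicit. Unset Printing Implicit Defensive.
Import Order.TTheory GRing.Theory Num.Theory.
Local Open Scope ring_scope.

(* H^n is modelled by column vectors 'cV[K]_n over K = R (conj = id) or
   K = R[i] (conj = complex conjugation).  All notions are parametrised by
   the conjugation [conj] of the scalar field. *)
Section Frames.
Variables (K : numFieldType) (conj : K -> K).

Definition inner (n : nat) (x y : 'cV[K]_n) : K :=
  \sum_(i < n) x i 0 * conj (y i 0).

Definition sqnorm (n : nat) (x : 'cV[K]_n) : K := \sum_(i < n) `|x i 0| ^+ 2.

Definition parseval (n m : nat) (X : 'I_m -> 'cV[K]_n) : Prop :=
  forall x : 'cV[K]_n, \sum_(k < m) `|inner x (X k)| ^+ 2 = sqnorm x.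

Definition adjoint (n : nat) (T : 'M[K]_n) : 'M[K]_n := map_mx conj T^T.

Definition selfadjoint (n : nat) (T : 'M[K]_n) : Prop := adjoint T = T.

Definition injective_family (n m : nat) (X : 'I_m -> 'cV[K]_n) : Prop :=
  forall T : 'M[K]_n, selfadjoint T ->
    (forall k, inner (T *m X k) (X k) = 0) -> T = 0.

Definition frame_dist2 (n m : nat) (X Y : 'I_m -> 'cV[K]_n) : K :=
  \sum_(k < m) sqnorm (X k - Y k).

Definition injective_parseval_dense (n m : nat) : Prop :=
  forall X : 'I_m -> 'cV[K]_n, parseval X ->
  forall eps : K, 0 < eps ->
  exists Y : 'I_m -> 'cV[K]_n,
    [/\ parseval Y, injective_family Y & frame_dist2 X Y < eps ^+ 2].
End Frames.

From HB Require Import structures.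
From mathcomp Require Import all_boot all_order all_algebra.
From mathcomp Require Import reals complex sesquilinear.
From mathcomp Require Import ring.
Import Order.TTheory GRing.Theory Num.Theory.
Local Open Scope ring_scope.
Set Implicit Arguments. Unset Strict Implicit. Unset Printing Implicit Defensive.
Local Open Scope sesquilinear_scope.

(* Identify a frame X with the n x m matrix of its vectors: X is Parseval iff
   X X^* = 1, and X is injective as soon as T |-> (<T x_k, x_k>)_k is
   injective on a space of matrices containing the self-adjoint ones
   ([quad_free]).  Under the bound on m some frame Z has this property; it is
   built from the vectors e_i, e_i + e_j and, in the complex case, e_i + i e_j.
   For the pencil s X + Z this property is witnessed by a determinant that is
   a polynomial in s equal to 1 at s = 0, so X + Z / s is injective for
   infinitely many s.  Gram-Schmidt on the rows of X + Z / s multiplies it on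
   the left by an invertible matrix, which keeps injectivity, and yields
   Parseval frames that converge to X as s -> oo. *)

Section Limits.
Variable K : numFieldType.
Implicit Types (f g : nat -> K) (a b c e M : K).

Definition eventually (P : nat -> Prop) := exists N, forall s, (N <= s)%N -> P s.

Definition tends (f : nat -> K) (c : K) :=
  forall e, 0 < e -> eventually (fun s => `|f s - c| < e).

Definition mx_tends p q (A : nat -> 'M[K]_(p, q)) (L : 'M[K]_(p, q)) :=
  forall i j, tends (fun s => A s i j) (L i j).

Lemma eventually_and (P Q : nat -> Prop) :
  eventually P -> eventually Q -> eventually (fun s => P s /\ Q s).
Proof.
move=> [N1 HP] [N2 HQ]; exists (maxn N1 N2) => s; rewrite geq_max => /andP[s1 s2].
by split; [apply: HP | apply: HQ].
Qed.

Lemma eventually_mono (P Q : nat -> Prop) :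
  (forall s, P s -> Q s) -> eventually P -> eventually Q.
Proof. by move=> PQ [N HP]; exists N => s /HP /PQ. Qed.

Lemma eventually_ge N : eventually (fun s => (N <= s)%N).
Proof. by exists N. Qed.

Lemma tends_cst c : tends (fun _ => c) c.
Proof. by move=> e e0; exists 0%N => s _; rewrite subrr normr0. Qed.

Lemma tends_ext f g c : tends f c -> f =1 g -> tends g c.
Proof. by move=> hf fg e /hf; apply: eventually_mono => s; rewrite fg. Qed.

Lemma tends0P f c : tends f c <-> tends (fun s => f s - c) 0.
Proof. by split=> hf e /hf; apply: eventually_mono => s; rewrite subr0. Qed.

Lemma tendsD f g a b : tends f a -> tends g b -> tends (fun s => f s + g s) (a + b).
Proof.
move=> hf hg e e0; have e2 : 0 < e / 2 by rewrite divr_gt0.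
apply: eventually_mono (eventually_and (hf _ e2) (hg _ e2)) => s [fa gb].
by rewrite opprD addrACA (le_lt_trans (ler_normD _ _)) // [e]splitr ltrD.
Qed.

Lemma tendsN f a : tends f a -> tends (fun s => - f s) (- a).
Proof. by move=> hf e /hf; apply: eventually_mono => s; rewrite -opprD normrN. Qed.

Lemma tendsB f g a b : tends f a -> tends g b -> tends (fun s => f s - g s) (a - b).
Proof. by move=> hf /tendsN; apply: tendsD. Qed.

Lemma tends_sum (I : Type) (r : seq I) (F : I -> nat -> K) (L : I -> K) :
  (forall i, tends (F i) (L i)) ->
  tends (fun s => \sum_(i <- r) F i s) (\sum_(i <- r) L i).
Proof.
move=> hF; elim: r => [|i r IH].
  by rewrite big_nil; apply: tends_ext (tends_cst 0) _ => s; rewrite big_nil.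
by rewrite big_cons; apply: tends_ext (tendsD (hF i) IH) _ => s; rewrite big_cons.
Qed.

Lemma tends_bounded f c :
  tends f c -> exists2 M, 0 < M & eventually (fun s => `|f s| <= M).
Proof.
move=> /(_ 1 ltr01) hf; exists (`|c| + 1); first by rewrite ltr_wpDl.
apply: eventually_mono hf => s fc; rewrite -[f s](subrK c) addrC.
by rewrite (le_trans (ler_normD _ _)) // lerD2l ltW.
Qed.

Lemma tends0M f g M :
  0 < M -> tends f 0 -> eventually (fun s => `|g s| <= M) ->
  tends (fun s => f s * g s) 0.
Proof.
move=> M0 hf hg e e0.
apply: eventually_mono (eventually_and (hf _ (divr_gt0 e0 M0)) hg) => s [f0 gM].
rewrite subr0 in f0; rewrite subr0 normrM.
by rewrite (le_lt_trans (ler_wpM2l (normr_ge0 _) gM)) // -ltr_pdivlMr.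
Qed.

Lemma tendsM f g a b : tends f a -> tends g b -> tends (fun s => f s * g s) (a * b).
Proof.
move=> hf hg; have [M M0 gM] := tends_bounded hg.
have aM : eventually (fun _ => `|a| <= `|a| + 1) by exists 0%N => s _; rewrite lerDl.
move/tends0P: hf => hf; move/tends0P: hg => hg.
have := tendsD (tends0M M0 hf gM) (tends0M (ltr_wpDl (normr_ge0 a) ltr01) hg aM).
rewrite addr0 => /tends_ext h; apply/tends0P/h => s; ring.
Qed.

Lemma tends_eventually_ext f g c :
  tends f c -> eventually (fun s => f s = g s) -> tends g c.
Proof.
move=> hf fg e /hf fc.
by apply: eventually_mono (eventually_and fc fg) => s [+ <-].
Qed.

Lemma tendsV f a : a != 0 -> tends f a -> tends (fun s => (f s)^-1) a^-1.
Proof.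
move=> a0 hf; have a2 : 0 < `|a| / 2 by rewrite divr_gt0 ?normr_gt0.
have fa : eventually (fun s => `|a| / 2 <= `|f s|).
  apply: eventually_mono (hf _ a2) => s fa.
  have := lerB_dist a (a - f s); rewrite subKr distrC => /(le_trans _); apply.
  by rewrite {2}[`|a|]splitr -addrA lerDl subr_ge0 ltW.
have f0 : eventually (fun s => f s != 0).
  by apply: eventually_mono fa => s fa; rewrite -normr_gt0 (lt_le_trans a2).
have M0 : 0 < (`|a| / 2 * `|a|)^-1 by rewrite invr_gt0 mulr_gt0 ?normr_gt0.
have fM : eventually (fun s => `|(f s * a)^-1| <= (`|a| / 2 * `|a|)^-1).
  apply: eventually_mono (eventually_and fa f0) => s [fas fs0].
  by rewrite normfV normrM lef_pV2 ?posrE ?ler_wpM2r ?mulr_gt0 ?normr_gt0 ?invr_gt0.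
have /tends0P af0 := tendsB (tends_cst a) hf; rewrite subrr in af0.
apply/tends0P; apply: tends_eventually_ext (tends0M M0 af0 fM) _.
by apply: eventually_mono f0 => s fs0; field; rewrite fs0 a0.
Qed.

Lemma tends_norm f c : tends f c -> tends (fun s => `|f s|) `|c|.
Proof.
move=> hf e /hf; apply: eventually_mono => s /(le_lt_trans _); apply.
by rewrite ler_dist_dist.
Qed.

Lemma tends_invn : (forall x : K, exists N, `|x| < N%:R) ->
  tends (fun s => (s%:R)^-1) 0.
Proof.
move=> archi e e0; have [N HN] := archi e^-1; exists N.+1 => s Ns.
have Ne : e^-1 < s%:R.
  apply: lt_le_trans (_ : N%:R <= s%:R); last by rewrite ler_nat ltnW.
  by rewrite (le_lt_trans (real_ler_norm _) HN) // gtr0_real ?invr_gt0.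
have s0 : 0 < s%:R :> K by rewrite (lt_trans _ Ne) ?invr_gt0.
by rewrite subr0 normfV ger0_norm ?ltW // -[e]invrK ltf_pV2 // ?posrE ?invr_gt0.
Qed.

Variables p q r : nat.

Lemma mx_tends_cst (L : 'M[K]_(p, q)) : mx_tends (fun _ => L) L.
Proof. by move=> i j; apply: tends_cst. Qed.

Lemma mx_tendsD (A B : nat -> 'M[K]_(p, q)) L L' :
  mx_tends A L -> mx_tends B L' -> mx_tends (fun s => A s + B s) (L + L').
Proof.
move=> hA hB i j; rewrite mxE.
by apply: tends_ext (tendsD (hA i j) (hB i j)) _ => s; rewrite mxE.
Qed.

Lemma mx_tendsN (A : nat -> 'M[K]_(p, q)) L :
  mx_tends A L -> mx_tends (fun s => - A s) (- L).
Proof.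
by move=> hA i j; rewrite mxE; apply: tends_ext (tendsN (hA i j)) _ => s; rewrite mxE.
Qed.

Lemma mx_tendsZ f a (A : nat -> 'M[K]_(p, q)) L :
  tends f a -> mx_tends A L -> mx_tends (fun s => f s *: A s) (a *: L).
Proof.
move=> hf hA i j; rewrite mxE.
by apply: tends_ext (tendsM hf (hA i j)) _ => s; rewrite mxE.
Qed.

Lemma mx_tendsM (A : nat -> 'M[K]_(p, q)) (B : nat -> 'M[K]_(q, r)) L L' :
  mx_tends A L -> mx_tends B L' -> mx_tends (fun s => A s *m B s) (L *m L').
Proof.
move=> hA hB i j; rewrite mxE.
by apply: tends_ext (tends_sum _ (fun k => tendsM (hA i k) (hB k j))) _ => s; rewrite mxE.
Qed.

Lemma mx_tends_usubmx (A : nat -> 'M[K]_(p + q, r)) L :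
  mx_tends A L -> mx_tends (fun s => usubmx (A s)) (usubmx L).
Proof. by move=> hA i j; rewrite mxE; apply: tends_ext (hA _ j) _ => s; rewrite mxE. Qed.

Lemma mx_tends_dsubmx (A : nat -> 'M[K]_(p + q, r)) L :
  mx_tends A L -> mx_tends (fun s => dsubmx (A s)) (dsubmx L).
Proof. by move=> hA i j; rewrite mxE; apply: tends_ext (hA _ j) _ => s; rewrite mxE. Qed.

Lemma mx_tends_col_mx (A : nat -> 'M[K]_(p, r)) (B : nat -> 'M[K]_(q, r)) L L' :
  mx_tends A L -> mx_tends B L' ->
  mx_tends (fun s => col_mx (A s) (B s)) (col_mx L L').
Proof.
move=> hA hB i j; rewrite -(splitK i); case: (split i) => k /=.
  by rewrite col_mxEu; apply: tends_ext (hA k j) _ => s; rewrite col_mxEu.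
by rewrite col_mxEd; apply: tends_ext (hB k j) _ => s; rewrite col_mxEd.
Qed.

End Limits.

Section QuadMx.
Variables (R : comNzRingType) (conj : {rmorphism R -> R}).

Definition frame_mx n m (X : 'I_m -> 'cV[R]_n) : 'M[R]_(n, m) :=
  \matrix_(i, k) X k i 0.

Lemma col_frame_mx n m (X : 'I_m -> 'cV[R]_n) k : col k (frame_mx X) = X k.
Proof. by apply/colP => i; rewrite !mxE. Qed.

Lemma frame_mx_col n m (A : 'M[R]_(n, m)) : frame_mx (fun k => col k A) = A.
Proof. by apply/matrixP => i k; rewrite !mxE. Qed.

Definition qform n (D : 'M[R]_n) (x : 'cV[R]_n) : R := (x ^t conj *m D *m x) 0 0.

Definition quad_mx n m (Y : 'I_m -> 'cV[R]_n) : 'M[R]_(n * n, m) :=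
  \matrix_(a, k) mxvec (map_mx conj (Y k) *m (Y k)^T) 0 a.

Lemma mxvec_mul_quad_mx n m (T : 'M[R]_n) (Y : 'I_m -> 'cV[R]_n) k :
  (mxvec T *m quad_mx Y) 0 k = qform T (Y k).
Proof.
have := mxvec_dotmul T (Y k ^t conj) (Y k)^T.
rewrite trmxK map_trmx trmxK /qform => <-.
by rewrite !mxE; apply: eq_bigr => a _; rewrite !mxE mulrC.
Qed.

Lemma eq_quad_mx n m (Y Y' : 'I_m -> 'cV[R]_n) : Y =1 Y' -> quad_mx Y = quad_mx Y'.
Proof. by move=> YY'; apply/matrixP => a k; rewrite !mxE YY'. Qed.

Lemma qform_delta n (D : 'M[R]_n) i : qform D (delta_mx i 0) = D i i.
Proof. by rewrite /qform trmx_delta map_delta_mx -rowE -colE !mxE. Qed.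

Lemma qform_delta2 n (D : 'M[R]_n) i j c :
  qform D (delta_mx i 0 + c *: delta_mx j 0)
  = D i i + c * D i j + conj c * D j i + conj c * c * D j j.
Proof.
rewrite /qform [(_ + _)^T]linearD /= [(c *: _)^T]linearZ /= map_mxD map_mxZ.
rewrite !trmx_delta !map_delta_mx !(mulmxDl, mulmxDr) -!(scalemxAl, scalemxAr).
by rewrite -!rowE -!colE !mxE mulrA; ring.
Qed.

End QuadMx.

Lemma map_quad_mx (R S : comNzRingType) (cR : {rmorphism R -> R})
    (cS : {rmorphism S -> S}) (f : {rmorphism R -> S}) n m
    (Y : 'I_m -> 'cV[R]_n) :
  f \o cR =1 cS \o f ->
  map_mx f (quad_mx cR Y) = quad_mx cS (fun k => map_mx f (Y k)).
Proof.
move=> fc; apply/matrixP => a k; rewrite !mxE.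
set P := _ *m _; have -> : f (mxvec P 0 a) = map_mx f (mxvec P) 0 a by rewrite mxE.
by rewrite map_mxvec map_mxM map_trmx -map_mx_comp (eq_map_mx _ fc) map_mx_comp.
Qed.

Lemma frame_dist2_tends (K : numFieldType) n m (X : 'I_m -> 'cV[K]_n)
    (Y : nat -> 'M[K]_(n, m)) e :
  mx_tends Y (frame_mx X) -> 0 < e ->
  eventually (fun s => frame_dist2 X (fun k => col k (Y s)) < e).
Proof.
move=> hY e0; have entry0 k i : tends (fun s => `|Y s i k - frame_mx X i k| ^+ 2) 0.
  have := tends_norm (tendsB (hY i k) (tends_cst (frame_mx X i k))).
  rewrite subrr normr0 => d0; have := tendsM d0 d0.
  by rewrite mulr0 => /tends_ext; apply => s; rewrite expr2.
have dE s : frame_dist2 X (fun k => col k (Y s))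
    = \sum_k \sum_i `|Y s i k - frame_mx X i k| ^+ 2.
  by apply: eq_bigr => k _; apply: eq_bigr => i _; rewrite !mxE distrC.
have := tends_sum (index_enum _) (fun k => tends_sum (index_enum _) (entry0 k)).
rewrite !big1 // => /(_ e e0); apply: eventually_mono => s.
rewrite -dE subr0 ger0_norm // sumr_ge0 // => k _.
by rewrite sumr_ge0 // => i _; rewrite exprn_ge0.
Qed.

Lemma natr_nonroot (F : numDomainType) N (q : {poly F}) :
  q != 0 -> exists2 s, (N <= s)%N & q.[s%:R] != 0.
Proof.
move=> q0; have [/existsP[i qi]|] := boolP [exists i : 'I_(size q), q.[(N + i)%:R] != 0].
  by exists (N + i)%N; rewrite ?leq_addr.
rewrite negb_exists => /forallP qN.
have := @max_poly_roots _ q [seq (N + i)%:R | i <- iota 0 (size q)] q0.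
rewrite size_map size_iota ltnn => max_roots; suff: false by [].
apply: max_roots.
  apply/allP => x; case/mapP => i; rewrite mem_iota add0n => lt_i_q ->.
  by have := qN (Ordinal lt_i_q); rewrite negbK.
rewrite map_inj_uniq ?iota_uniq // => i j /eqP.
by rewrite eqr_nat eqn_add2l => /eqP.
Qed.

Section Conjugation.
Variables (K : numFieldType) (conj : {rmorphism K -> K}).
Hypothesis conj_mul : forall x, x * conj x = `|x| ^+ 2.

(* [C] is meant to vanish on the vectorized self-adjoint matrices. *)
Definition quad_free n m p (C : 'M[K]_(n * n, p)) (Y : 'I_m -> 'cV[K]_n) :=
  row_free (row_mx (quad_mx conj Y) C).

Lemma conj_ge0 x : 0 <= x -> conj x = x.
Proof.
move=> x0; have [->|x_neq0] := eqVneq x 0; first by rewrite rmorph0.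
by apply: (mulfI x_neq0); rewrite conj_mul ger0_norm.
Qed.

Lemma conjK : involutive conj.
Proof.
move=> x; have [->|x0] := eqVneq x 0; first by rewrite !rmorph0.
have cx0 : conj x != 0 by rewrite fmorph_eq0.
apply: (mulfI cx0); rewrite -rmorphM conj_mul.
by rewrite (conj_ge0 (exprn_ge0 2 (normr_ge0 x))) -conj_mul mulrC.
Qed.

Lemma norm_conj x : `|conj x| = `|x|.
Proof.
apply/eqP; rewrite -(eqrXn2 (_ : 0 < 2)%N) ?normr_ge0 //.
by rewrite -!conj_mul conjK mulrC.
Qed.

Lemma adjmxK p q (A : 'M[K]_(p, q)) : A ^t conj ^t conj = A.
Proof. by apply/matrixP => i j; rewrite !mxE conjK. Qed.

Lemma adjmxM p q r (A : 'M[K]_(p, q)) (B : 'M[K]_(q, r)) :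
  (A *m B) ^t conj = B ^t conj *m A ^t conj.
Proof. by rewrite trmx_mul map_mxM. Qed.

Lemma adjmx1 n : (1%:M : 'M[K]_n) ^t conj = 1%:M.
Proof. by rewrite trmx1 map_mx1. Qed.

Lemma dotmx_adj p (w : 'rV[K]_p) : (w *m w ^t conj) 0 0 = \sum_i `|w 0 i| ^+ 2.
Proof. by rewrite mxE; apply: eq_bigr => i _; rewrite !mxE conj_mul. Qed.

Lemma inner_mulmx n (T : 'M[K]_n) x : inner conj (T *m x) x = qform conj T x.
Proof.
rewrite /qform -mulmxA mxE; apply: eq_bigr => i _.
by rewrite !mxE mulrC.
Qed.

Lemma qformB n (A B : 'M[K]_n) x : qform conj (A - B) x = qform conj A x - qform conj B x.
Proof. by rewrite /qform mulmxBr mulmxBl !mxE. Qed.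

Lemma hermitian_qform_eq0 n (D : 'M[K]_n) :
  D ^t conj = D -> (forall x, qform conj D x = 0) -> D = 0.
Proof.
(* The test vector e_i + conj (D i j) e_j yields 2 |D i j|^2 = 0. *)
move=> hD hq; have Dii i : D i i = 0 by rewrite -(qform_delta conj) hq.
apply/matrixP => i j; rewrite mxE.
have := hq (delta_mx i 0 + conj (D i j) *: delta_mx j 0).
have Dji : D j i = conj (D i j) by rewrite -{1}hD !mxE.
rewrite qform_delta2 Dji !Dii conjK mulr0 add0r addr0 mulrC conj_mul -mulr2n => /eqP.
by rewrite mulrn_eq0 /= sqrf_eq0 normr_eq0 => /eqP.
Qed.

Lemma sqnorm_qform n (x : 'cV[K]_n) : sqnorm x = qform conj 1%:M x.
Proof.
rewrite /qform mulmx1 mxE; apply: eq_bigr => i _.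
by rewrite !mxE -conj_mul mulrC.
Qed.

Lemma sum_inner_frame n m (X : 'I_m -> 'cV[K]_n) x :
  \sum_k `|inner conj x (X k)| ^+ 2
  = qform conj (frame_mx X *m frame_mx X ^t conj) x.
Proof.
rewrite /qform; set F := frame_mx X.
have -> : x ^t conj *m (F *m F ^t conj) *m x = x ^t conj *m F *m (x ^t conj *m F) ^t conj.
  by rewrite adjmxM adjmxK !mulmxA.
rewrite dotmx_adj.
apply: eq_bigr => k _; rewrite -norm_conj rmorph_sum !mxE.
by congr (`|_| ^+ 2); apply: eq_bigr => i _; rewrite !mxE rmorphM conjK mulrC.
Qed.

Lemma parsevalP n m (X : 'I_m -> 'cV[K]_n) :
  parseval conj X <-> frame_mx X *m frame_mx X ^t conj = 1%:M.
Proof.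
split=> [hX|hF x]; last by rewrite sum_inner_frame hF sqnorm_qform.
apply/eqP; rewrite -subr_eq0; apply/eqP/hermitian_qform_eq0.
  by rewrite linearB /= map_mxB adjmxM adjmxK adjmx1.
by move=> x; rewrite qformB -sum_inner_frame -sqnorm_qform hX subrr.
Qed.

Lemma injective_family_mulmx n m (Y : 'I_m -> 'cV[K]_n) (B : 'M[K]_n) :
  B \in unitmx -> injective_family conj Y ->
  injective_family conj (fun k => B *m Y k).
Proof.
move=> uB hY T hT hq; have uBt : B ^t conj \in unitmx by rewrite map_unitmx unitmx_tr.
suff TB0 : B ^t conj *m T *m B = 0.
  by rewrite -(mulKmx uBt T) -(mulmxK uB (B ^t conj *m T)) TB0 mul0mx mulmx0.
have hT' : T ^t conj = T := hT.
apply: hY => [|k]; first by rewrite /selfadjoint /adjoint !adjmxM adjmxK hT' mulmxA.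
by rewrite inner_mulmx -(hq k) inner_mulmx /qform adjmxM !mulmxA.
Qed.

Lemma quad_free_injective n m p (C : 'M[K]_(n * n, p)) (Y : 'I_m -> 'cV[K]_n) :
  (forall T, selfadjoint conj T -> mxvec T *m C = 0) ->
  quad_free C Y -> injective_family conj Y.
Proof.
move=> hC hY T hT hq; apply: (can_inj (@mxvecK _ n n)); rewrite linear0.
have qT : mxvec T *m quad_mx conj Y = 0.
  by apply/rowP => k; rewrite mxvec_mul_quad_mx -inner_mulmx hq mxE.
by apply/eqP; rewrite -(mulmx_free_eq0 _ hY) mul_mx_row qT hC // row_mx0.
Qed.

Lemma eq_injective_family n m (Y Y' : 'I_m -> 'cV[K]_n) :
  Y =1 Y' -> injective_family conj Y -> injective_family conj Y'.
Proof. by move=> YY' hY T hT hq; apply: hY => // k; rewrite YY'. Qed.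

Lemma pad_quad_free n m p (C : 'M[K]_(n * n, p)) (I : finType) (v : I -> 'cV[K]_n) :
  (#|I| <= m)%N ->
  (forall T, (forall i, qform conj T (v i) = 0) -> mxvec T *m C = 0 -> T = 0) ->
  exists Z : 'I_m -> 'cV[K]_n, quad_free C Z.
Proof.
move=> le_I_m hv; exists (fun k => nth 0 [seq v i | i <- enum I] k).
apply/inj_row_free => w; rewrite mul_mx_row -row_mx0 => /eq_row_mx[wQ wC].
suff /(congr1 mxvec) : vec_mx w = 0 by rewrite vec_mxK linear0.
apply: hv => [i|]; last by rewrite vec_mxK.
have lt_i_I : (index i (enum I) < #|I|)%N by rewrite cardE index_mem mem_enum.
have := congr1 (fun M : 'rV_m => M 0 (widen_ord le_I_m (Ordinal lt_i_I))) wQ.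
rewrite -{1}[w]vec_mxK mxvec_mul_quad_mx mxE /=.
by rewrite (nth_map i) ?nth_index ?mem_enum // -cardE.
Qed.

Lemma tends_conj f c : tends f c -> tends (fun s => conj (f s)) (conj c).
Proof. by move=> hf e /hf; apply: eventually_mono => s; rewrite -rmorphB norm_conj. Qed.

Lemma mx_tends_adj p q (A : nat -> 'M[K]_(p, q)) L :
  mx_tends A L -> mx_tends (fun s => A s ^t conj) (L ^t conj).
Proof.
move=> hA i j; rewrite !mxE.
by apply: tends_ext (tends_conj (hA j i)) _ => s; rewrite !mxE.
Qed.

Lemma col_mx_adj_unitP p q m (A : 'M[K]_(p, m)) (B : 'M[K]_(q, m)) :
  col_mx A B *m col_mx A B ^t conj = 1%:M <->
  [/\ A *m A ^t conj = 1%:M, B *m B ^t conj = 1%:M & B *m A ^t conj = 0].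
Proof.
rewrite tr_col_mx map_row_mx mul_col_row scalar_mx_block; split.
  by move=> /eq_block_mx[-> _ -> ->].
move=> [-> -> BA]; congr block_mx => //.
by rewrite -[LHS]adjmxK adjmxM adjmxK BA trmx0 map_mx0.
Qed.

Variable sqrt : K -> K.
Hypotheses (sqrt_ge0 : forall x, 0 <= x -> 0 <= sqrt x)
  (sqrtK : forall x, 0 <= x -> sqrt x ^+ 2 = x).

Lemma tends_sqrt1 f : (forall s, 0 <= f s) -> tends f 1 -> tends (fun s => sqrt (f s)) 1.
Proof.
move=> f0 hf e /hf; apply: eventually_mono => s /(le_lt_trans _); apply.
have r0 := sqrt_ge0 (f0 s); rewrite -{2}(sqrtK (f0 s)).
have -> : sqrt (f s) ^+ 2 - 1 = (sqrt (f s) - 1) * (sqrt (f s) + 1) by ring.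
by rewrite normrM ler_peMr // ger0_norm ?addr_ge0 // lerDr.
Qed.

Definition rownorm m (g : 'rV[K]_m) := sqrt ((g *m g ^t conj) 0 0).

Lemma dotmx_adj_ge0 m (g : 'rV[K]_m) : 0 <= (g *m g ^t conj) 0 0.
Proof. by rewrite dotmx_adj sumr_ge0 // => i _; rewrite exprn_ge0. Qed.

Lemma rownorm_tends m (g : nat -> 'rV[K]_m) x :
  x *m x ^t conj = 1%:M -> mx_tends g x -> tends (fun s => rownorm (g s)) 1.
Proof.
move=> hx hg; apply: tends_sqrt1 => [s|]; first exact: dotmx_adj_ge0.
by have := mx_tendsM hg (mx_tends_adj hg) 0 0; rewrite hx mxE.
Qed.

Lemma rownormalize m (g : 'rV[K]_m) : rownorm g != 0 ->
  (rownorm g)^-1 *: g *m ((rownorm g)^-1 *: g) ^t conj = 1%:M.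
Proof.
move=> r0; have r_ge0 : 0 <= (rownorm g)^-1 by rewrite invr_ge0 sqrt_ge0 ?dotmx_adj_ge0.
rewrite linearZ /= map_mxZ conj_ge0 // -scalemxAl -scalemxAr scalerA.
rewrite [g *m _]mx11_scalar -(sqrtK (dotmx_adj_ge0 g)) -/(rownorm g).
by rewrite scale_scalar_mx; congr (_%:M); field.
Qed.

Lemma mx_tends_rownormalize m (g : nat -> 'rV[K]_m) x :
  x *m x ^t conj = 1%:M -> mx_tends g x ->
  mx_tends (fun s => (rownorm (g s))^-1 *: g s) x.
Proof.
move=> hx hg; have := mx_tendsZ (tendsV (oner_neq0 K) (rownorm_tends hx hg)) hg.
by rewrite invr1 scale1r.
Qed.

Lemma mx_tends_orthogonalize p m (G : nat -> 'M[K]_(p, m)) (u : nat -> 'rV[K]_m) L x :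
  mx_tends G L -> mx_tends u x -> L *m x ^t conj = 0 ->
  mx_tends (fun s => G s - G s *m u s ^t conj *m u s) L.
Proof.
move=> hG hu hLx.
have := mx_tendsD hG (mx_tendsN (mx_tendsM (mx_tendsM hG (mx_tends_adj hu)) hu)).
by rewrite hLx mul0mx oppr0 addr0.
Qed.

Lemma gram_schmidt n m (X : 'M[K]_(n, m)) (G : nat -> 'M[K]_(n, m)) :
  X *m X ^t conj = 1%:M -> mx_tends G X ->
  exists2 B : nat -> 'M[K]_n,
    eventually (fun s => B s \in unitmx /\ B s *m G s *m (B s *m G s) ^t conj = 1%:M)
    & mx_tends (fun s => B s *m G s) X.
Proof.
elim: n X G => [|n IH] X G hX hG.
  exists (fun _ => 1%:M); last by case.
  by exists 0%N => s _; rewrite unitmx1; split=> //; apply/matrixP => -[].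
have XE : X = col_mx (usubmx (X : 'M_(1 + n, m))) (dsubmx (X : 'M_(1 + n, m))).
  by rewrite vsubmxK.
set x := usubmx _ in XE; set X' := dsubmx _ in XE.
have [hx hX' hX'x] : [/\ x *m x ^t conj = 1%:M, X' *m X' ^t conj = 1%:M
    & X' *m x ^t conj = 0] by apply/col_mx_adj_unitP; rewrite -XE.
pose g s := usubmx (G s : 'M_(1 + n, m)); pose G' s := dsubmx (G s : 'M_(1 + n, m)).
have hg : mx_tends g x := @mx_tends_usubmx _ 1 n m G X hG.
have hG' : mx_tends G' X' := @mx_tends_dsubmx _ 1 n m G X hG.
pose r s := rownorm (g s); pose u s := (r s)^-1 *: g s.
have hu : mx_tends u x := mx_tends_rownormalize hx hg.
pose H s := G' s - G' s *m u s ^t conj *m u s.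
have [B' evB' hB'] := IH X' H hX' (mx_tends_orthogonalize hG' hu hX'x).
(* B s normalizes the first row, removes its component from the other rows,
   and then applies B' s to them. *)
pose B s : 'M[K]_(1 + n) :=
  block_mx (r s)^-1%:M 0 (- (r s)^-1 *: (B' s *m G' s *m u s ^t conj)) (B' s).
have BG s : B s *m G s = col_mx (u s) (B' s *m H s).
  rewrite -[G s](@vsubmxK _ 1 n) mul_block_col mul_scalar_mx mul0mx addr0.
  congr col_mx; rewrite /H mulmxBr -!scalemxAl -!scalemxAr -scaleNr.
  by rewrite !mulmxA addrC.
exists B; last first.
  by rewrite XE => i j; apply: tends_ext (mx_tends_col_mx hu hB' i j) _ => s; rewrite BG.
have r1 : eventually (fun s => `|r s - 1| < 1) := rownorm_tends hx hg ltr01.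
apply: eventually_mono (eventually_and evB' r1) => {r1} s [[uB' hB's] r1].
have r0 : r s != 0 by apply: contraTneq r1 => ->; rewrite sub0r normrN normr1 ltxx.
split.
  rewrite /B unitmxE (@det_lblock _ 1 n) det_scalar1 unitrM -unitmxE uB'.
  by rewrite unitfE invr_eq0 r0.
have hu1 : u s *m u s ^t conj = 1%:M := rownormalize r0.
rewrite BG; apply/(@col_mx_adj_unitP 1 n m); split => //.
by rewrite -mulmxA /H mulmxBl -[_ *m u s *m _]mulmxA hu1 mulmx1 subrr mulmx0.
Qed.

Lemma pencil_quad_free n m p (C : 'M[K]_(n * n, p)) (X Z : 'I_m -> 'cV[K]_n) :
  quad_free C Z -> forall N, exists2 s, (N <= s)%N &
    quad_free C (fun k => s%:R *: X k + Z k).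
Proof.
move=> /row_freeP[M hM] N.
pose Y k := 'X *: map_mx polyC (X k) + map_mx polyC (Z k).
pose q := \det (row_mx (quad_mx (map_poly conj) Y) (map_mx polyC C) *m map_mx polyC M).
have polyCK r c (A : 'M[K]_(r, c)) t : map_mx (horner_eval t) (map_mx polyC A) = A.
  by apply/matrixP => i j; rewrite !mxE horner_evalE hornerC.
have qE t : conj t = t ->
    q.[t] = \det (row_mx (quad_mx conj (fun k => t *: X k + Z k)) C *m M).
  move=> ct; have fc : horner_eval t \o map_poly conj =1 conj \o horner_eval t.
    by move=> a /=; rewrite !horner_evalE -{1}ct horner_map.
  rewrite -horner_evalE -det_map_mx map_mxM map_row_mx !polyCK (map_quad_mx _ fc).
  congr (\det (row_mx _ _ *m _)); apply: eq_quad_mx => k.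
  by apply/matrixP => i j; rewrite !mxE -[LHS]/((_ : {poly K}).[t]) !hornerE.
have q0 : q != 0.
  apply: contra_neq (oner_neq0 K) => q0; rewrite -(det1 _ (n * n)) -hM.
  rewrite (@eq_quad_mx _ _ _ _ Z (fun k => 0 *: X k + Z k)) => [|k]; last first.
    by rewrite scale0r add0r.
  by rewrite -qE ?rmorph0 // q0 horner0.
have [s Ns] := natr_nonroot N q0; rewrite qE ?rmorph_nat // => qs; exists s => //.
move: qs; rewrite -unitfE -unitmxE -row_free_unit => /eqP rk.
by rewrite /quad_free /row_free eqn_leq rank_leq_row -{1}rk mxrankM_maxl.
Qed.

Theorem injective_parseval_dense_of_quad_free n m p (C : 'M[K]_(n * n, p)) :
  (forall x : K, exists N, `|x| < N%:R) ->
  (forall T, selfadjoint conj T -> mxvec T *m C = 0) ->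
  (exists Z : 'I_m -> 'cV[K]_n, quad_free C Z) ->
  injective_parseval_dense conj n m.
Proof.
move=> archi hC [Z hZ] X /parsevalP hX eps eps0.
pose G s := frame_mx X + (s%:R)^-1 *: frame_mx Z.
have hG : mx_tends G (frame_mx X).
  have := mx_tendsZ (tends_invn archi) (mx_tends_cst (frame_mx Z)).
  by move/(mx_tendsD (mx_tends_cst (frame_mx X))); rewrite scale0r addr0.
have [B hB /frame_dist2_tends hd] := gram_schmidt hX hG.
have [N hN] :=
  eventually_and (eventually_and hB (hd _ (exprn_gt0 2 eps0))) (eventually_ge 1).
have [s /hN[[[uB hBG] hdist] s_gt0] hs] := pencil_quad_free X hZ N.
exists (fun k => col k (B s *m G s)); split=> //.
  by apply/parsevalP; rewrite frame_mx_col.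
have s0 : (s%:R : K) != 0 by rewrite pnatr_eq0 -lt0n.
have hinj := quad_free_injective hC hs.
apply: eq_injective_family (injective_family_mulmx (B := B s *m (s%:R^-1)%:M) _ hinj).
  move=> k.
  rewrite !colE -!mulmxA mul_scalar_mx /G mulmxDl -scalemxAl -!colE !col_frame_mx.
  by rewrite scalerDr scalerA mulVf // scale1r.
by rewrite unitmx_mul uB unitmxE det_scalar unitrX // unitfE invr_eq0.
Qed.

End Conjugation.

Section Witnesses.
Variable K : numFieldType.

Lemma quad_free_symmetric n m : ((n * (n + 1)) %/ 2 <= m)%N ->
  exists Z : 'I_m -> 'cV[K]_n,
    quad_free idfun (1%:M - lin_mx trmx) Z.
Proof.
move=> hm; pose I := ('I_n + {A : {set 'I_n} | #|A| == 2})%type.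
pose v (a : I) : 'cV[K]_n :=
  match a with inl i => delta_mx i 0 | inr A => \sum_(k in val A) delta_mx k 0 end.
apply: (@pad_quad_free _ idfun n m _ _ I v) => [|T hT].
  rewrite card_sum card_ord card_sig.
  have -> : #|[pred A : {set 'I_n} | #|A| == 2]| = 'C(n, 2).
    by rewrite -cardsE card_draws card_ord.
  by rewrite addnC -[n in (_ + n)%N]bin1 -binS bin2 -divn2 /= mulnC -addn1.
rewrite mulmxBr mulmx1 mul_vec_lin => /eqP; rewrite subr_eq0 => /eqP /(can_inj mxvecK) sT.
have Tii i : T i i = 0 by rewrite -(qform_delta idfun) (hT (inl i)).
apply/matrixP => i j; rewrite mxE; have [<-|ij] := eqVneq i j; first exact: Tii.
have A2 : #|[set i; j]| == 2 by rewrite cards2 ij.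
have := hT (inr (exist (fun A : {set 'I_n} => #|A| == 2) _ A2)).
rewrite /= big_setU1 ?big_set1 ?inE //=.
rewrite -[delta_mx j 0]scale1r qform_delta2 !Tii {2}sT mxE /= !mul1r addr0 add0r.
by move/eqP; rewrite -mulr2n mulrn_eq0 => /eqP.
Qed.

Lemma quad_free_imaginary (conj : {rmorphism K -> K}) (w : K) n m :
  w != 0 -> conj w = - w -> (n ^ 2 <= m)%N ->
  exists Z : 'I_m -> 'cV[K]_n, quad_free conj (0 : 'M_(n * n, 0)) Z.
Proof.
move=> w0 cw hm.
pose c (i j : 'I_n) := if (i < j)%N then 1 else if i == j then 0 else w.
pose v (a : 'I_n * 'I_n) : 'cV[K]_n := delta_mx a.1 0 + c a.1 a.2 *: delta_mx a.2 0.
apply: (@pad_quad_free _ conj n m _ _ _ v) => [|T hT _].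
  by rewrite card_prod card_ord mulnn.
have hq i j :
    T i i + c i j * T i j + conj (c i j) * T j i + conj (c i j) * c i j * T j j = 0.
  by rewrite -qform_delta2 (hT (i, j)).
have Tii i : T i i = 0.
  by have := hq i i; rewrite /c ltnn eqxx rmorph0 !mul0r !addr0.
have Tij (i j : 'I_n) : (i < j)%N -> T i j = 0 /\ T j i = 0.
  move=> lt_ij; have := hq i j; have := hq j i.
  have ji : (j == i) = false by apply/eqP => ji; rewrite ji ltnn in lt_ij.
  rewrite /c lt_ij ltnNge (ltnW lt_ij) ji rmorph1 cw !Tii.
  rewrite !mulr0 !mul1r !addr0 !add0r mulNr => /eqP; rewrite subr_eq0.
  rewrite (inj_eq (mulfI w0)) => /eqP ->.
  by move/eqP; rewrite -mulr2n mulrn_eq0 => /eqP ->.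
apply/matrixP => i j; rewrite mxE.
by case: (ltngtP i j) => [/Tij[]|/Tij[]|/val_inj <-].
Qed.

End Witnesses.

Lemma mxvec_selfadjoint_id (K : numFieldType) n (T : 'M[K]_n) :
  selfadjoint idfun T -> mxvec T *m (1%:M - lin_mx trmx) = 0.
Proof.
move=> hT; rewrite mulmxBr mulmx1 mul_vec_lin /=.
by rewrite -[in X in _ - X]hT /adjoint eq_map_mx_id // trmxK subrr.
Qed.

Lemma complex_archimedean (R : realType) (x : R[i]) : exists N, `|x| < N%:R.
Proof.
have /complex_realP[k ->] := normr_real x; exists (Num.bound `|k|).
rewrite -(rmorph_nat (real_complex R)) ltcR.
by rewrite (le_lt_trans (ler_norm k)) // archi_boundP.
Qed.

Theorem mainTheorem7 (R : realType) (n m : nat) :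
  (((n * (n + 1)) %/ 2 <= m)%N -> injective_parseval_dense (@id R) n m)
  /\ ((n ^ 2 <= m)%N ->
      injective_parseval_dense (fun z : R[i] => z^*) n m).
Proof.
split=> hm.
  apply: (@injective_parseval_dense_of_quad_free _ idfun _ Num.sqrt _ _ _ _ _
    (1%:M - lin_mx trmx)).
  - by move=> x; rewrite real_normK ?num_real.
  - by move=> x _; rewrite sqrtr_ge0.
  - by move=> x; apply: sqr_sqrtr.
  - by move=> x; exists (Num.bound `|x|); rewrite archi_boundP.
  - exact: mxvec_selfadjoint_id.
  - exact: quad_free_symmetric.
apply: (@injective_parseval_dense_of_quad_free _ Num.conj_op _ sqrtC _ _ _ _ _ 0).
- by move=> x; rewrite normCK.
- by move=> x; rewrite sqrtC_ge0.
- by move=> x _; rewrite sqrtCK.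
- exact: complex_archimedean.
- by move=> T _; rewrite mulmx0.
- exact: quad_free_imaginary (neq0Ci _) (conjCi _) hm.
Qed.
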